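(* Let $p$ be a prime and let $G$ be a finite top $p$-group such that $Z(G)$ and $G/G'$ are elementary abelian. Then $G$ is the direct product of a special $p$-group and an abelian group.
   Context: For a group $H$, $H'$ denotes its commutator subgroup and $Z(H)$ its center. A finite group $G$ is top if $|H/H'| < |G/G'|$ for every proper subgroup $H<G$. A finite $p$-group $P$ is special if $P' = Z(P) = \Phi(P)$, where $\Phi(P)$ is the Frattini subgroup of $P$. *)

From mathcomp Require Import all_boot all_fingroup all_solvable.
Set Implicit Arguments. Unset Strict Implicit. Unset Printing Implicit Defensive.
Local Open Scope group_scope.

Definition top_group (gT : finGroupType) (G : {group gT}) : Prop :=
  forall H : {group gT}, H \proper G -> #|H / H^`(1)| < #|G / G^`(1)|.

Definition special_pgroup (gT : finGroupType) (p : nat) (P : {group gT}) : Prop :=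
  [/\ p.-group P, P^`(1) = 'Z(P) & 'Z(P) = 'Phi(P)].

From mathcomp Require Import all_boot all_fingroup all_solvable.
Set Implicit Arguments. Unset Strict Implicit. Unset Printing Implicit Defensive.
Local Open Scope group_scope.

(* The key point is that a top p-group G has class at most 2.  Otherwise,
   factoring out a normal subgroup of index p in [G', G] (topness passes to
   quotients by subgroups of G'), we may assume that [G', G] has order p,
   hence is central.  Then G' is abelian, K := C_G(G') is a proper subgroup
   containing G' with K' central, and since every commutator [y, g] with
   y in G' lies in a group of order p, |G : K| <= |G' : C_G'(G)| <= |G' : K'|;
   thus |G : G'| <= |K : K'|, contradicting topness.
   Once G' <= Z(G), split Z(G) = (Z(G) :&: G') x A and lift a complement of
   AG'/G' in the elementary abelian G/G' to S >= G'; then G = S x A, and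
   S' = Z(S) = Phi(S) = G'. *)

Lemma index_setI_leq (gT : finGroupType) (G A B : {group gT}) :
  A \subset G -> B \subset G -> #|G : A :&: B| <= #|G : A| * #|G : B|.
Proof.
move=> sAG sBG.
rewrite -(Lagrange_index sAG (subsetIl A B)) leq_mul2l indexgI.
rewrite -(leq_pmul2r (cardG_gt0 B)) LagrangeMr mulnC (Lagrange sBG).
by rewrite orbC subset_leq_card // mulG_subG sAG.
Qed.

Lemma index_cent1_leq (gT : finGroupType) (G Y C : {group gT}) (y : gT) :
  y \in Y -> [~: Y, G] \subset C -> #|G : 'C_G[y]| <= #|C|.
Proof.
move=> Yy sYGC; rewrite index_cent1 -(card_lcoset C y) subset_leq_card //.
apply/subsetP=> _ /imsetP[g Gg ->]; rewrite conjg_mulR mem_lcoset mulKg.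
by rewrite (subsetP sYGC) ?mem_commg.
Qed.

Lemma index_cent_leq (gT : finGroupType) (p : nat) (G Y C : {group gT}) :
    p.-group G -> Y \subset G -> [~: Y, G] \subset C -> #|C| <= p ->
  #|G : 'C_G(Y)| <= #|Y : 'C_Y(G)|.
Proof.
move=> pG sYG sYGC oC.
(* Induction on |Y| through a maximal subgroup M of Y containing C_Y(G):
   C_M(G) = C_Y(G), |Y : M| = p, and the extra generator y costs at most
   |G : C_G[y]| <= |C| <= p. *)
elim: {Y}_.+1 {-2}Y (ltnSn #|Y|) sYG sYGC => // n IHn Y leYn sYG sYGC.
have [cYG | not_cYG] := boolP (Y \subset 'C(G)).
  by rewrite (setIidPl _) ?indexgg ?indexg_gt0 // centsC.
have prZY : 'C_Y(G) \proper Y.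
  rewrite properEneq subsetIl andbT.
  by apply: contraNneq not_cYG => <-; exact: subsetIr.
have [M maxM sZM] :=
  @maxgroup_exists _ (fun M : {group gT} => M \proper Y) _ prZY.
have [prMY _] := maxgroupP maxM.
have [sMY [y Yy My]] := properP prMY.
have defY : M <*> <[y]> = Y.
  apply/eqP; rewrite eqEproper join_subG sMY cycle_subG Yy /=.
  apply: contra My => /(maxgroupP maxM).2/(_ (joing_subl _ _)) <-.
  by rewrite mem_gen // inE cycle_id orbT.
have defZM : 'C_M(G) = 'C_Y(G).
  by apply/eqP; rewrite eqEsubset setSI //= subsetI sZM subsetIr.
have sCMy : 'C_G(M) :&: 'C_G[y] \subset 'C_G(Y).
  rewrite -defY centY -cent_cycle subsetI subIset ?subsetIl //=.
  by rewrite setISS ?subsetIr.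
have pY : p.-group Y := pgroupS sYG pG.
have leMn := leq_trans (proper_card prMY) leYn.
have sMG := subset_trans sMY sYG.
have IHM := IHn M leMn sMG (subset_trans (commSg G sMY) sYGC).
rewrite defZM in IHM.
rewrite -(Lagrange_index sMY sZM) (p_maximal_index pY maxM) mulnC.
apply: leq_trans (dvdn_leq (indexg_gt0 _ _) (indexgS G sCMy)) _.
apply: leq_trans (index_setI_leq (subsetIl _ _) (subsetIl _ _)) _.
exact: leq_mul IHM (leq_trans (index_cent1_leq Yy sYGC) oC).
Qed.

Lemma prime_normal_center (gT : finGroupType) (G H : {group gT}) :
  nilpotent G -> H <| G -> prime #|H| -> H \subset 'Z(G).
Proof.
move=> nilG nsHG prH; apply: contraR (meet_center_nil nilG nsHG _) => [notsHZ|].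
  by rewrite prime_TIg.
by rewrite trivg_card1; apply: contraTneq prH => ->.
Qed.

Lemma abelian_der1_of_class3 (gT : finGroupType) (G : {group gT}) :
  [~: G^`(1), G, G] = 1 -> abelian G^`(1).
Proof.
move=> cDGG; apply/commG1P; rewrite derg1 in cDGG *.
by apply: three_subgroup; rewrite // (commGC G).
Qed.

Lemma der1_cent_der1_sub_center (gT : finGroupType) (G : {group gT}) :
  ('C_G(G^`(1)))^`(1) \subset 'Z(G).
Proof.
set K := 'C_G(_); have sKG : K \subset G := subsetIl _ _.
have cDK : [~: G, K] \subset 'C(K).
  by rewrite centsC (subset_trans (subsetIr _ _)) ?centS ?commgS.
rewrite subsetI gFsub_trans //= derg1; apply/commG1P.
by apply: three_subgroup; apply/commG1P; rewrite 1?(commGC K).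
Qed.

Lemma top_group_quotient (gT : finGroupType) (G N : {group gT}) :
  N <| G -> N \subset G^`(1) -> top_group G -> top_group (G / N).
Proof.
move=> nsNG sNG' topG Hb prHb.
have [H defHb sNH sHG] := inv_quotientS nsNG (proper_sub prHb).
rewrite {Hb}defHb in prHb *.
have nNG := normal_norm nsNG; have nNH := subset_trans sHG nNG.
have prHG : H \proper G.
  by rewrite -(quotient_proper (normalS sNH sHG nsNG) nsNG).
rewrite -!quotient_der // !card_quotient ?quotient_norms ?der_norm //=.
rewrite [X in _ < X]index_quotient_eq ?der_sub ?subIset ?sNG' ?orbT //.
apply: leq_ltn_trans (_ : _ <= #|H : H^`(1)|) _.
  by rewrite dvdn_leq ?indexg_gt0 // index_quotient ?subIset ?nNH.
by rewrite -!card_quotient ?der_norm ?topG.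
Qed.

Lemma top_pgroup_card_commDG_neq_p (gT : finGroupType) (p : nat)
    (G : {group gT}) :
  prime p -> p.-group G -> top_group G -> #|[~: G^`(1), G]| != p.
Proof.
move=> p_pr pG topG; apply/eqP => oDG.
set D := G^`(1); set K := 'C_G(D).
have sDG : D \subset G := der_sub 1 G.
have cDGG : [~: D, G, G] = 1.
  apply/commG1P; apply: subset_trans (subsetIr G _).
  apply: prime_normal_center; rewrite ?oDG ?(pgroup_nil pG) //.
  by rewrite /normal /= commg_subr normsG ?commg_normr.
have sDK : D \subset K by rewrite subsetI sDG; exact: abelian_der1_of_class3.
have sKG : K \subset G := subsetIl _ _.
have prKG : K \proper G.
  rewrite properEneq sKG andbT; apply: contraTneq p_pr => defK; rewrite -oDG.
  have /commG1P-> : D \subset 'C(G) by rewrite -defK centsC subsetIr.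
  by rewrite cards1.
have sK'ZD : K^`(1) \subset 'C_D(G).
  rewrite subsetI dergS //=.
  exact: subset_trans (der1_cent_der1_sub_center G) (subsetIr _ _).
have := topG K prKG; apply/negP; rewrite -leqNgt !card_quotient ?der_norm //.
rewrite -(Lagrange_index sKG sDK) -(Lagrange_index sDK (dergS 1 sKG)) mulnC.
apply: leq_mul (leqnn _) _.
apply: leq_trans (index_cent_leq pG sDG (subxx _) (eq_leq oDG)) _.
by rewrite dvdn_leq ?indexg_gt0 ?indexgS.
Qed.

Lemma top_pgroup_der1_sub_center (gT : finGroupType) (p : nat)
    (G : {group gT}) :
  prime p -> p.-group G -> top_group G -> G^`(1) \subset 'Z(G).
Proof.
move=> p_pr pG topG; rewrite subsetI der_sub; apply/commG1P/eqP/idPn => ntC.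
set C := [~: G^`(1), G].
have sCG' : C \subset G^`(1) by rewrite commg_subl der_norm.
have nsCG : C <| G.
  by rewrite /normal /= (subset_trans sCG') ?der_sub ?commg_normr.
have pC : p.-group C := pgroupS (normal_sub nsCG) pG.
have k_gt0 : 0 < logn p #|C|.
  by rewrite -(ltn_exp2l 0 _ (prime_gt1 p_pr)) -card_pgroup // cardG_gt1.
have [N [sNC nsNG oN]] := normal_pgroup pG nsCG (leq_pred (logn p #|C|)).
have nNC := subset_trans (normal_sub nsCG) (normal_norm nsNG).
have oCN : #|C / N| = p.
  rewrite card_quotient // -divgS // oN {1}(card_pgroup pC).
  rewrite -expnB ?prime_gt0 ?leq_pred //.
  by rewrite -{1}(prednK k_gt0) subSnn.
have pGN := quotient_pgroup N pG.
have topGN := top_group_quotient nsNG (subset_trans sNC sCG') topG.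
have := top_pgroup_card_commDG_neq_p p_pr pGN topGN.
have nNG := normal_norm nsNG.
rewrite -quotient_der // -quotientR ?(subset_trans (der_sub 1 G)) //.
by rewrite oCN eqxx.
Qed.

Lemma central_dprod_complement (gT : finGroupType) (p : nat)
    (G D A : {group gT}) :
    D <| G -> p.-abelem (G / D) -> A \subset 'Z(G) -> A :&: D = 1 ->
  exists S : {group gT}, S \x A = G.
Proof.
move=> nsDG abGD sAZ tiAD; have nDG := normal_norm nsDG.
have sAG : A \subset G := subset_trans sAZ (center_sub G).
have [Cb ACb] := abelem_split_dprod abGD (quotientS D sAG).
have [_ defGD _ tiACb] := dprodP ACb.
have sCbGD : Cb \subset G / D by rewrite -defGD mulG_subr.
have [S defCb sDS sSG] := inv_quotientS nsDG sCbGD.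
exists S; rewrite dprodEY.
- apply/eqP; rewrite eqEsubset join_subG sSG sAG /=.
  rewrite -(quotientSGK nDG) ?(subset_trans sDS (joing_subl _ _)) //.
  by rewrite -defGD defCb mulG_subG !quotientS ?joing_subl ?joing_subr.
- exact: subset_trans sAZ (subset_trans (subsetIr _ _) (centS sSG)).
- apply/trivgP; rewrite -tiAD subsetI subsetIr /= -quotient_sub1.
    by rewrite quotientGI // -defCb setIC tiACb.
  exact: subset_trans (subsetIl _ _) (subset_trans sSG nDG).
Qed.

Lemma dprod_special_factor (gT : finGroupType) (p : nat) (G S A : {group gT}) :
    p.-group G -> p.-abelem (G / G^`(1)) ->
    G^`(1) \subset 'Z(G) -> 'Z(G) \subset G^`(1) * A ->
  S \x A = G -> abelian A -> special_pgroup p S.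
Proof.
move=> pG abGG' sG'Z sZG'A SxA abA.
have [_ defG _ tiSA] := dprodP SxA.
have sSG : S \subset G by rewrite -defG mulG_subl.
have pS : p.-group S := pgroupS sSG pG.
have defS' : S^`(1) = G^`(1).
  by have := der_dprod 1 SxA; rewrite (derG1P abA) dprodg1.
have sG'S : G^`(1) \subset S by rewrite -defS' der_sub.
have cG'S : G^`(1) \subset 'C(S).
  exact: subset_trans sG'Z (subset_trans (subsetIr _ _) (centS sSG)).
have defZS : 'Z(S) = G^`(1).
  apply/eqP; rewrite eqEsubset subsetI sG'S cG'S !andbT.
  have [_ defZ _ _] := dprodP (center_dprod SxA).
  have sZSZG : 'Z(S) \subset 'Z(G) by rewrite -defZ mulG_subl.
  rewrite -(mulg1 G^`(1)) -tiSA setIC group_modl //.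
  by rewrite subsetI center_sub (subset_trans sZSZG).
split=> //; first by rewrite defS' defZS.
have sPhiG' : 'Phi(S) \subset G^`(1).
  rewrite (Phi_min pS) ?(subset_trans sSG) ?der_norm //.
  exact: abelemS (quotientS _ sSG) abGG'.
by apply/eqP; rewrite defZS eqEsubset sPhiG' -{1}defS' (Phi_joing pS) joing_subl.
Qed.

Theorem lemma3p2 (gT : finGroupType) (p : nat) (G : {group gT}) :
  prime p -> p.-group G -> top_group G ->
  p.-abelem 'Z(G) -> p.-abelem (G / G^`(1)) ->
  exists S A : {group gT},
    [/\ S \x A = G, special_pgroup p S & abelian A].
Proof.
move=> p_pr pG topG abZ abGG'.
have sG'Z := top_pgroup_der1_sub_center p_pr pG topG.
have [A ZG'xA] := abelem_split_dprod abZ (subsetIl 'Z(G) G^`(1)).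
have [_ defZ _ tiZG'A] := dprodP ZG'xA.
have sAZ : A \subset 'Z(G) by rewrite -defZ mulG_subr.
have tiAG' : A :&: G^`(1) = 1.
  by rewrite -(setIidPl sAZ) -setIA setIC tiZG'A.
have [S SxA] := central_dprod_complement (der_normal 1 G) abGG' sAZ tiAG'.
have abA : abelian A := abelianS sAZ (center_abelian G).
exists S, A; split=> //; apply: dprod_special_factor pG abGG' sG'Z _ SxA abA.
by rewrite -{1}defZ mulSg ?subsetIr.
Qed.
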